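(* Let $A/B\ne 1/0$ be a convergent of $\theta$, and let $[c_0;c_1,\dots,c_m]$ be any finite continued fraction expansion of the rational number $A/B$ (with $c_0\ge1$ and $c_i\ge1$). Then $\lambda(|A-B\theta|)=c_0+c_1+\cdots+c_m$. Also $\lambda(|1-0\cdot\theta|)=0$.
   Context: Fix an irrational $\theta$ with $1<\theta<2$. Let $S(\theta)=\{i+j\theta : i,j\in\mathbb{N}_0\}$ and let $s_0<s_1<s_2<\cdots$ be its elements in increasing order. Put $\delta(n)=s_{n+1}-s_n$. Let $\lambda$ be the map from the set of values $\{\delta(n):n\ge0\}$ to $\mathbb{N}_0$ that numbers the distinct values in order of first occurrence: $\lambda(\delta(0))=0$, and the $m$-th distinct value to appear in the sequence $\delta(0),\delta(1),\dots$ (counting from $m=0$) receives label $m$. Write $\theta=[t_0;t_1,t_2,\dots]$ (so $t_0=1$) and define $a_{-2}=0,b_{-2}=1,a_{-1}=1,b_{-1}=0$, $a_k=t_ka_{k-1}+a_{k-2}$, $b_k=t_kb_{k-1}+b_{k-2}$ for $k\ge0$. The convergents of $\theta$ are the fraction $1/0$ together with all fractions $\frac{t a_k+a_{k-1}}{t b_k+b_{k-1}}$ with $k\ge -1$ and $1\le t\le t_{k+1}$. For every convergent $A/B$, the number $|A-B\theta|$ is one of the values $\delta(n)$. *)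

From Stdlib Require Import Reals Lra Lia ZArith Arith List.
Open Scope R_scope.

Definition irrational (x : R) : Prop :=
  ~ exists p q : Z, q <> 0%Z /\ x = IZR p / IZR q.

Definition inS (theta x : R) : Prop :=
  exists i j : nat, x = INR i + INR j * theta.

Definition is_increasing_enum (theta : R) (s : nat -> R) : Prop :=
  (forall n, s n < s (S n)) /\ (forall x, inS theta x <-> exists n, s n = x).

Definition delta (s : nat -> R) (n : nat) : R := s (S n) - s n.

Definition first_occb (d : nat -> R) (j : nat) : bool :=
  forallb (fun j' => if Req_dec_T (d j') (d j) then false else true) (seq 0 j).

Definition n_distinct_before (d : nat -> R) (k : nat) : nat :=
  length (filter (first_occb d) (seq 0 k)).

(* lam d v m : the value v occurs in the sequence d and its label
   (numbering distinct values by order of first occurrence, from 0) is m. *)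
Definition lam (d : nat -> R) (v : R) (m : nat) : Prop :=
  exists k, d k = v /\ (forall k', (k' < k)%nat -> d k' <> v) /\
            m = n_distinct_before d k.

Definition rfloor (x : R) : Z := (up x - 1)%Z.

Fixpoint cf_rem (theta : R) (k : nat) : R :=
  match k with
  | O => theta
  | S k' => / (cf_rem theta k' - IZR (rfloor (cf_rem theta k')))
  end.

Definition cf_t (theta : R) (k : nat) : nat := Z.to_nat (rfloor (cf_rem theta k)).

(* Shifted indexing: pa theta n = a_{n-2}, pb theta n = b_{n-2}. *)
Fixpoint pab (theta : R) (n : nat) : nat * nat :=
  match n with
  | O => (0%nat, 1%nat)
  | S O => (1%nat, 0%nat)
  | S ((S n'') as n') =>
      let (a1, b1) := pab theta n' in
      let (a0, b0) := pab theta n'' in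
      (cf_t theta n'' * a1 + a0, cf_t theta n'' * b1 + b0)%nat
  end.
Definition pa (theta : R) (n : nat) : nat := fst (pab theta n).
Definition pb (theta : R) (n : nat) : nat := snd (pab theta n).

Fixpoint cf_val (c0 : nat) (cs : list nat) : R :=
  match cs with
  | nil => INR c0
  | c1 :: cs' => INR c0 + / cf_val c1 cs'
  end.

From Stdlib Require Import Reals Lra Lia Psatz ZArith Arith List.
Open Scope R_scope.

(** Walk down the Stern-Brocot tree towards [theta]: a bracket
   [p/q < theta < r/u] with [r q - p u = 1] is refined at each step by its mediant.
   (1) A unimodularity argument shows that the gap following any element of
       [S(theta)] is either [1] or the gap [|A - B theta|] of some mediant [A/B]
       met before, and that the gap of the mediant examined at step [n] first occurs
       right after the element [A] (or [B theta]) of [S(theta)]; these elements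
       increase with [n] and the mediant gaps are pairwise distinct, so the label
       of the gap of the [n]-th mediant is [n + 1].
   (2) The convergent [(t a_k + a_(k-1))/(t b_k + b_(k-1))] is the mediant examined
       at step [t_0 + ... + t_k + t - 1] of the walk.
   (3) The sum of the partial quotients of any expansion of [A/B] equals the number
       of steps of the subtractive Euclidean algorithm on [(A, B)], which for the
       mediant of step [n] is [n + 1]. *)

(** * Partial quotients of the continued fraction of [theta] *)

Lemma irrational_not_integer (x : R) (z : Z) : irrational x -> x <> IZR z.
Proof.
  intros Hirr E. apply Hirr. exists z, 1%Z. split; [lia|]. rewrite E. field.
Qed.

Lemma irrational_relation (th : R) (x y : Z) :
  irrational th -> IZR x = IZR y * th -> y = 0%Z.
Proof.
  intros Hirr E. destruct (Z.eq_dec y 0) as [|Hy]; auto. exfalso. apply Hirr.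
  exists x, y. split; auto. rewrite E. field. now apply not_0_IZR.
Qed.

Lemma irrational_relation_nat (th : R) (a b : nat) :
  irrational th -> INR a = INR b * th -> b = 0%nat.
Proof.
  intros Hirr E. rewrite !INR_IZR_INZ in E. apply irrational_relation in E; auto. lia.
Qed.

Lemma rfloor_spec (x : R) : irrational x -> IZR (rfloor x) < x < IZR (rfloor x) + 1.
Proof.
  intros Hirr. unfold rfloor. destruct (archimed x) as [Hup1 Hup2]. rewrite minus_IZR.
  split; [|lra]. destruct (Req_dec (IZR (up x) - 1) x) as [E|E]; [|lra].
  exfalso. apply (irrational_not_integer x (up x - 1) Hirr). rewrite minus_IZR. lra.
Qed.

Lemma cf_rem_irrational (th : R) :
  irrational th -> 1 < th -> forall k, irrational (cf_rem th k) /\ 1 < cf_rem th k.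
Proof.
  intros Hirr Hgt1 k. induction k as [|k [Hirr_k Hgt1_k]]; simpl; auto.
  set (x := cf_rem th k) in *. destruct (rfloor_spec x Hirr_k) as [F1 F2].
  set (f := rfloor x) in *. split.
  - intros [p [q [Hq E]]].
    assert (Hp : p <> 0%Z).
    { intros ->. rewrite Rdiv_0_l in E.
      assert (0 < / (x - IZR f)) by (apply Rinv_0_lt_compat; lra). lra. }
    apply Hirr_k. exists (f * p + q)%Z, p. split; auto.
    assert (IZR p <> 0) by now apply not_0_IZR.
    assert (IZR q <> 0) by now apply not_0_IZR.
    assert (x - IZR f = IZR q / IZR p).
    { rewrite <- (Rinv_inv (x - IZR f)), E. field. auto. }
    rewrite plus_IZR, mult_IZR. replace x with (IZR f + IZR q / IZR p) by lra. field. auto.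
  - rewrite <- Rinv_1. apply Rinv_lt_contravar; lra.
Qed.

Lemma cf_t_spec (th : R) :
  irrational th -> 1 < th -> forall k,
  INR (cf_t th k) < cf_rem th k /\ cf_rem th (S k) * (cf_rem th k - INR (cf_t th k)) = 1.
Proof.
  intros Hirr Hgt1 k. destruct (cf_rem_irrational th Hirr Hgt1 k) as [Hirr_k Hgt1_k].
  destruct (rfloor_spec _ Hirr_k) as [F1 F2].
  assert (Hf : (0 <= rfloor (cf_rem th k))%Z).
  { apply le_IZR. lra. }
  assert (E : INR (cf_t th k) = IZR (rfloor (cf_rem th k))).
  { unfold cf_t. rewrite INR_IZR_INZ. f_equal. lia. }
  rewrite E. split; [lra|]. simpl. rewrite <- E in *. field. lra.
Qed.

(** * The subtractive Euclidean algorithm *)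

(* Number of steps of the subtractive Euclidean algorithm on [(p, q)], the final
   step [p = q] included; [fuel] bounds the recursion and [p + q] always suffices. *)
Fixpoint euclid_steps (fuel p q : nat) : nat :=
  match fuel with
  | O => O
  | S fuel' =>
      if Nat.eqb p q then 1%nat
      else if Nat.ltb p q then S (euclid_steps fuel' p (q - p))
      else S (euclid_steps fuel' (p - q) q)
  end.

(* [euclid_depth p q] is the depth of [p/q] in the Stern-Brocot tree ([1/1] has depth 1). *)
Definition euclid_depth (p q : nat) : nat := euclid_steps (p + q) p q.

Lemma euclid_steps_sym (fuel p q : nat) : euclid_steps fuel p q = euclid_steps fuel q p.
Proof.
  revert p q. induction fuel as [|fuel IH]; intros p q; simpl; auto.
  destruct (Nat.eqb_spec p q), (Nat.eqb_spec q p); try lia; auto.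
  destruct (Nat.ltb_spec p q), (Nat.ltb_spec q p); try lia; f_equal; apply IH.
Qed.

Lemma euclid_steps_fuel (fuel fuel' p q : nat) : (1 <= p)%nat -> (1 <= q)%nat ->
  (p + q <= fuel)%nat -> (p + q <= fuel')%nat -> euclid_steps fuel p q = euclid_steps fuel' p q.
Proof.
  revert fuel' p q. induction fuel as [|fuel IH]; intros fuel' p q Hp Hq H H'; [lia|].
  destruct fuel' as [|fuel']; [lia|]. simpl.
  destruct (Nat.eqb_spec p q); auto.
  destruct (Nat.ltb_spec p q); f_equal; apply IH; lia.
Qed.

Lemma euclid_depth_sym (p q : nat) : euclid_depth p q = euclid_depth q p.
Proof. unfold euclid_depth. rewrite euclid_steps_sym. f_equal. lia. Qed.

Lemma euclid_depth_diag (q : nat) : (1 <= q)%nat -> euclid_depth q q = 1%nat.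
Proof.
  intros Hq. unfold euclid_depth. destruct (q + q)%nat eqn:E; [lia|].
  simpl. now rewrite Nat.eqb_refl.
Qed.

Lemma euclid_depth_add (p q : nat) : (1 <= p)%nat -> (1 <= q)%nat ->
  euclid_depth (p + q) q = S (euclid_depth p q).
Proof.
  intros Hp Hq. unfold euclid_depth.
  replace (p + q + q)%nat with (S (p + q + q - 1)) by lia. simpl.
  destruct (Nat.eqb_spec (p + q) q); [lia|]. destruct (Nat.ltb_spec (p + q) q); [lia|].
  f_equal. replace (p + q - q)%nat with p by lia. apply euclid_steps_fuel; lia.
Qed.

Lemma euclid_depth_add_l (p q : nat) : (1 <= p)%nat -> (1 <= q)%nat ->
  euclid_depth p (p + q) = S (euclid_depth p q).
Proof.
  intros Hp Hq. rewrite euclid_depth_sym, Nat.add_comm, euclid_depth_add by lia.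
  now rewrite euclid_depth_sym.
Qed.

Lemma euclid_depth_addmul (c r q : nat) : (1 <= r)%nat -> (1 <= q)%nat ->
  euclid_depth (c * q + r) q = (c + euclid_depth r q)%nat.
Proof.
  intros Hr Hq. induction c as [|c IH]; simpl; auto.
  replace (q + c * q + r)%nat with ((c * q + r) + q)%nat by lia.
  rewrite euclid_depth_add by lia. now rewrite IH.
Qed.

Lemma cf_val_ge1 (cs : list nat) (c0 : nat) :
  (1 <= c0)%nat -> Forall (fun c => (1 <= c)%nat) cs -> 1 <= cf_val c0 cs.
Proof.
  revert c0. induction cs as [|c1 cs IH]; intros c0 H0 Hcs; simpl.
  - now apply (le_INR 1).
  - inversion Hcs as [|? ? H1 Hcs']; subst. specialize (IH c1 H1 Hcs').
    assert (1 <= INR c0) by now apply (le_INR 1).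
    assert (0 < / cf_val c1 cs) by (apply Rinv_0_lt_compat; lra). lra.
Qed.

Lemma euclid_depth_cf_val (cs : list nat) (c0 p q : nat) :
  (1 <= c0)%nat -> Forall (fun c => (1 <= c)%nat) cs -> (1 <= p)%nat -> (1 <= q)%nat ->
  cf_val c0 cs = INR p / INR q -> euclid_depth p q = (c0 + list_sum cs)%nat.
Proof.
  revert c0 p q. induction cs as [|c1 cs IH]; intros c0 p q H0 Hcs Hp Hq Hv; simpl in *.
  - assert (Hpq : INR p = INR (c0 * q)).
    { rewrite mult_INR. assert (0 < INR q) by now apply (lt_INR 0).
      rewrite Hv. field. lra. }
    apply INR_eq in Hpq. subst p.
    replace (c0 * q)%nat with ((c0 - 1) * q + q)%nat by nia.
    rewrite euclid_depth_addmul, euclid_depth_diag by lia. lia.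
  - inversion Hcs as [|? ? H1 Hcs']; subst.
    pose proof (cf_val_ge1 cs c1 H1 Hcs') as Hv1.
    assert (Hq' : 0 < INR q) by now apply (lt_INR 0).
    set (v := cf_val c1 cs) in *.
    (* [p = c0 q + r] with [0 < r = q / v <= q], and [q / r = [c1; ...]] *)
    assert (Hp_eq : INR p = INR c0 * INR q + INR q / v).
    { replace (INR p) with (INR p / INR q * INR q) by (field; lra). rewrite <- Hv. field. lra. }
    assert (Hrq : 0 < INR q / v <= INR q).
    { split; [apply Rdiv_lt_0_compat; lra|].
      apply Rmult_le_reg_r with v; [lra|]. unfold Rdiv. rewrite Rmult_assoc, Rinv_l by lra. nra. }
    assert (Hlo : (c0 * q < p)%nat) by (apply INR_lt; rewrite mult_INR; lra).
    set (r := (p - c0 * q)%nat).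
    assert (Hr : INR r = INR q / v).
    { unfold r. rewrite minus_INR by lia. rewrite mult_INR. lra. }
    assert (Hr1 : (1 <= r)%nat) by (apply INR_lt; simpl; lra).
    assert (Hcf : cf_val c1 cs = INR q / INR r) by (fold v; rewrite Hr; field; lra).
    replace p with (c0 * q + r)%nat by (unfold r; lia).
    rewrite euclid_depth_addmul, euclid_depth_sym by lia.
    rewrite (IH c1 q r H1 Hcs' Hq Hr1 Hcf). lia.
Qed.


(** * Counting distinct values in order of first occurrence *)

Lemma first_occb_iff (d : nat -> R) (j : nat) :
  first_occb d j = true <-> forall j', (j' < j)%nat -> d j' <> d j.
Proof.
  unfold first_occb. rewrite forallb_forall. split.
  - intros H j' Hj E. specialize (H j'). rewrite in_seq in H. specialize (H ltac:(lia)).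
    destruct Req_dec_T; [discriminate|contradiction].
  - intros H x Hx. rewrite in_seq in Hx. destruct Req_dec_T; auto.
    exfalso. apply (H x); auto; lia.
Qed.

Lemma n_distinct_before_S (d : nat -> R) (k : nat) :
  n_distinct_before d (S k) = (n_distinct_before d k + if first_occb d k then 1 else 0)%nat.
Proof.
  unfold n_distinct_before. rewrite seq_S, filter_app, length_app. simpl.
  destruct (first_occb d k); simpl; lia.
Qed.

Lemma n_distinct_before_next (d : nat -> R) (a b : nat) : (a < b)%nat ->
  first_occb d a = true -> (forall i, (a < i < b)%nat -> first_occb d i = false) ->
  n_distinct_before d b = S (n_distinct_before d a).
Proof.
  intros Hab Ha Hbetween. induction b as [|b IH]; [lia|].
  rewrite n_distinct_before_S. destruct (Nat.eq_dec a b) as [<-|Hne].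
  - rewrite Ha. lia.
  - rewrite Hbetween by lia.
    rewrite IH by (lia || (intros i Hi; apply Hbetween; lia)). lia.
Qed.

(** * The Stern-Brocot walk towards [theta] *)

(* A bracket [lnum/lden < theta < unum/uden] of the Stern-Brocot walk towards
   [theta] ([1/0] stands for infinity). *)
Record bracket := Bracket { lnum : nat; lden : nat; unum : nat; uden : nat }.

Section FixedTheta.

Variable th : R.

Definition sb_step (X : bracket) : bracket :=
  if Rlt_dec (INR (lnum X + unum X)) (INR (lden X + uden X) * th)
  then Bracket (lnum X + unum X) (lden X + uden X) (unum X) (uden X)
  else Bracket (lnum X) (lden X) (lnum X + unum X) (lden X + uden X).

Fixpoint sb (n : nat) : bracket :=
  match n with O => Bracket 0 1 1 0 | S n' => sb_step (sb n') end.

Definition med_num (n : nat) : nat := (lnum (sb n) + unum (sb n))%nat.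
Definition med_den (n : nat) : nat := (lden (sb n) + uden (sb n))%nat.
Definition med_below (n : nat) : Prop := INR (med_num n) < INR (med_den n) * th.

Definition lower_gap (X : bracket) : R := INR (lden X) * th - INR (lnum X).
Definition upper_gap (X : bracket) : R := INR (unum X) - INR (uden X) * th.

Lemma sb_S_below (n : nat) : med_below n ->
  sb (S n) = Bracket (med_num n) (med_den n) (unum (sb n)) (uden (sb n)).
Proof. intros H. simpl. unfold sb_step. destruct Rlt_dec; [auto|contradiction]. Qed.

Lemma sb_S_above (n : nat) : ~ med_below n ->
  sb (S n) = Bracket (lnum (sb n)) (lden (sb n)) (med_num n) (med_den n).
Proof. intros H. simpl. unfold sb_step. destruct Rlt_dec; [contradiction|auto]. Qed.

Hypothesis Hirr : irrational th.
Hypothesis Hth : 1 < th < 2.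

Definition admissible (X : bracket) : Prop :=
  (unum X * lden X = lnum X * uden X + 1)%nat /\ 0 < lower_gap X /\ 0 < upper_gap X /\
  (1 <= lden X)%nat /\ (1 <= unum X)%nat.

Lemma sb_admissible (n : nat) : admissible (sb n).
Proof.
  induction n as [|n (U & Hl & Hu & Hq & Hr)].
  - unfold admissible, lower_gap, upper_gap; simpl. repeat split; try lia; lra.
  - destruct (Rlt_dec (INR (med_num n)) (INR (med_den n) * th)) as [L|L].
    + rewrite sb_S_below by exact L.
      unfold admissible, lower_gap, upper_gap, med_num, med_den in *; simpl.
      repeat split; try nia; rewrite ?plus_INR in *; lra.
    + rewrite sb_S_above by exact L.
      unfold admissible, lower_gap, upper_gap, med_num, med_den in *; simpl.
      assert (INR (med_num n) <> INR (med_den n) * th).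
      { intros E. apply irrational_relation_nat in E; auto. unfold med_den in E. lia. }
      unfold med_num, med_den in *. repeat split; try nia; lra.
Qed.

Lemma med_den_pos (n : nat) : (1 <= med_den n)%nat.
Proof. destruct (sb_admissible n) as (_ & _ & _ & H & _). unfold med_den. lia. Qed.

Lemma med_num_pos (n : nat) : (1 <= med_num n)%nat.
Proof. destruct (sb_admissible n) as (_ & _ & _ & _ & H). unfold med_num. lia. Qed.

Lemma med_below_0 : med_below 0.
Proof. unfold med_below, med_num, med_den. simpl. lra. Qed.

Lemma sb_1 : sb 1 = Bracket 1 1 1 0.
Proof. simpl. unfold sb_step. simpl. destruct Rlt_dec as [|L]; auto. simpl in L. lra. Qed.

Lemma sb_2 : sb 2 = Bracket 1 1 2 1.
Proof.
  change (sb 2) with (sb_step (sb 1)). rewrite sb_1. unfold sb_step. simpl.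
  destruct Rlt_dec as [L|]; auto. simpl in L. lra.
Qed.

Lemma sb_gaps_le1 (n : nat) : lower_gap (sb (S n)) < 1 /\ upper_gap (sb (S n)) <= 1.
Proof.
  induction n as [|n [IHl IHu]].
  - rewrite sb_1. unfold lower_gap, upper_gap; simpl. lra.
  - destruct (sb_admissible (S n)) as (_ & Hl & Hu & _).
    destruct (Rlt_dec (INR (med_num (S n))) (INR (med_den (S n)) * th)) as [L|L];
      [rewrite (sb_S_below (S n)) by exact L | rewrite (sb_S_above (S n)) by exact L];
      unfold lower_gap, upper_gap, med_num, med_den in *; simpl in *;
      rewrite !plus_INR; split; lra.
Qed.

Lemma sb_ends_are_mediants (n : nat) :
  (exists a, (a <= n)%nat /\ med_below a /\
     med_num a = lnum (sb (S n)) /\ med_den a = lden (sb (S n))) /\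
  ((unum (sb (S n)) = 1%nat /\ uden (sb (S n)) = 0%nat) \/
   exists b, (b <= n)%nat /\ ~ med_below b /\
     med_num b = unum (sb (S n)) /\ med_den b = uden (sb (S n))).
Proof.
  induction n as [|n [[a (Ha1 & Ha2 & Ha3 & Ha4)] HU]].
  - rewrite sb_1. split; [exists 0%nat; repeat split; auto using med_below_0 | left; auto].
  - destruct (Rlt_dec (INR (med_num (S n))) (INR (med_den (S n)) * th)) as [L|L].
    + rewrite (sb_S_below (S n)) by exact L. simpl. split.
      * exists (S n). repeat split; auto.
      * destruct HU as [HU|[b (Hb1 & Hb2 & Hb3 & Hb4)]];
          [left; auto | right; exists b; repeat split; auto].
    + rewrite (sb_S_above (S n)) by exact L. simpl. split.
      * exists a. repeat split; auto.
      * right. exists (S n). repeat split; auto.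
Qed.

Lemma sb_growth (n : nat) :
  (1 <= lnum (sb (S (S n))))%nat /\ (1 <= uden (sb (S (S n))))%nat /\
  (n <= med_num (S (S n)))%nat /\ (n <= med_den (S (S n)))%nat.
Proof.
  induction n as [|n IH].
  - unfold med_num, med_den. rewrite sb_2. simpl. lia.
  - pose proof (sb_admissible (S (S n))) as (_ & _ & _ & Hq & Hr).
    unfold med_num, med_den in *.
    destruct (Rlt_dec (INR (med_num (S (S n)))) (INR (med_den (S (S n))) * th)) as [L|L];
      [rewrite (sb_S_below (S (S n))) by exact L | rewrite (sb_S_above (S (S n))) by exact L];
      cbn [lnum lden unum uden]; unfold med_num, med_den; lia.
Qed.

Definition governs (n i j : nat) : Prop :=
  (i < med_num (S n))%nat /\ (j < med_den (S n))%nat /\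
  ((lnum (sb (S n)) <= i)%nat \/ (uden (sb (S n)) <= j)%nat).

Lemma governs_below (N i j : nat) : (i < med_num (S N))%nat -> (j < med_den (S N))%nat ->
  exists n, governs n i j.
Proof.
  revert i j. induction N as [|N IH]; intros i j Hi Hj.
  - exists 0%nat. unfold governs, med_num, med_den in *. rewrite sb_1 in *. simpl in *. lia.
  - destruct (Nat.lt_ge_cases i (med_num (S N))), (Nat.lt_ge_cases j (med_den (S N)));
      try (apply IH; auto; fail);
      exists (S N); unfold governs; repeat split; auto;
      (destruct (Rlt_dec (INR (med_num (S N))) (INR (med_den (S N)) * th)) as [L|L];
       [rewrite (sb_S_below (S N)) by exact L | rewrite (sb_S_above (S N)) by exact L];
       cbn [lnum lden unum uden]; unfold med_num, med_den in *; lia).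
Qed.

Lemma governs_all (i j : nat) : exists n, governs n i j.
Proof.
  destruct (sb_growth (S (i + j))) as (_ & _ & G1 & G2).
  apply (governs_below (S (S (i + j)))); lia.
Qed.

(** * Gaps of [S(theta)] *)

Variable s : nat -> R.
Hypothesis Henum : is_increasing_enum th s.

Lemma s_increasing (a b : nat) : (a < b)%nat -> s a < s b.
Proof.
  destruct Henum as [Hs _]. induction 1 as [|b _ IH]; [apply Hs|]. specialize (Hs b). lra.
Qed.

Lemma s_lt_index (a b : nat) : s a < s b -> (a < b)%nat.
Proof.
  intros H. destruct (Nat.lt_ge_cases a b) as [|Hba]; auto.
  destruct (Nat.eq_dec a b) as [->|]; [lra|].
  pose proof (s_increasing b a ltac:(lia)). lra.
Qed.

Lemma s_le_index (a b : nat) : s a <= s b -> (a <= b)%nat.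
Proof.
  intros H. destruct (Nat.le_gt_cases a b) as [|Hba]; auto.
  pose proof (s_increasing b a Hba). lra.
Qed.

Lemma s_in_S (n : nat) : exists i j, s n = INR i + INR j * th.
Proof. destruct Henum as [_ HS]. apply HS. now exists n. Qed.

Lemma S_repr_unique (i j i' j' : nat) :
  INR i + INR j * th = INR i' + INR j' * th -> i = i' /\ j = j'.
Proof.
  intros E.
  assert (H : IZR (Z.of_nat i - Z.of_nat i') = IZR (Z.of_nat j' - Z.of_nat j) * th).
  { rewrite !minus_IZR, <- !INR_IZR_INZ. lra. }
  apply irrational_relation in H; auto.
  assert (j = j') as <- by lia. split; auto. apply INR_eq. lra.
Qed.

(* The move [(x, y)] from the lattice point [(i, j)] stays in [N x N]. *)
Definition move_ok (i j : nat) (x y : Z) : Prop :=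
  (- Z.of_nat i <= x)%Z /\ (- Z.of_nat j <= y)%Z.

Lemma delta_least_move (n i j : nat) (x y : Z) :
  s n = INR i + INR j * th -> move_ok i j x y -> 0 < IZR x + IZR y * th ->
  (forall x' y', move_ok i j x' y' -> 0 < IZR x' + IZR y' * th ->
     IZR x + IZR y * th <= IZR x' + IZR y' * th) ->
  delta s n = IZR x + IZR y * th.
Proof.
  intros Hn [Fx Fy] Hv Hmin. pose proof Henum as [Hs HS].
  unfold delta. apply Rle_antisym.
  - destruct (HS (s n + (IZR x + IZR y * th))) as [[m Hm] _].
    { exists (Z.to_nat (Z.of_nat i + x)), (Z.to_nat (Z.of_nat j + y)).
      rewrite !INR_IZR_INZ, !Z2Nat.id by lia. rewrite Hn, !plus_IZR, <- !INR_IZR_INZ. ring. }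
    assert (n < m)%nat by (apply s_lt_index; lra).
    destruct (Nat.eq_dec (S n) m) as [<-|]; [lra|].
    pose proof (s_increasing (S n) m ltac:(lia)). lra.
  - destruct (s_in_S (S n)) as [i' [j' E']].
    assert (Hd : s (S n) - s n =
      IZR (Z.of_nat i' - Z.of_nat i) + IZR (Z.of_nat j' - Z.of_nat j) * th).
    { rewrite E', Hn, !minus_IZR, <- !INR_IZR_INZ. ring. }
    rewrite Hd. apply Hmin; [split; lia|]. rewrite <- Hd. specialize (Hs n). lra.
Qed.

(* In the box under the mediant of an admissible bracket, a positive move is at
   least the lower gap or the upper gap; which one is forced by the position:
   write the move in the unimodular basis [(-lnum, lden)], [(unum, -uden)]. *)
Lemma move_ge_gap (X : bracket) (i j : nat) (x y : Z) : admissible X ->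
  (i < lnum X + unum X)%nat -> (j < lden X + uden X)%nat ->
  move_ok i j x y -> 0 < IZR x + IZR y * th ->
  (lower_gap X <= IZR x + IZR y * th /\ upper_gap X <= IZR x + IZR y * th) \/
  (lower_gap X <= IZR x + IZR y * th /\ (lnum X <= i)%nat) \/
  (upper_gap X <= IZR x + IZR y * th /\ (uden X <= j)%nat).
Proof.
  destruct X as [p q r u]. intros (U & Hl & Hu & Hq & Hr) Hi Hj [Fx Fy] Hv.
  unfold lower_gap, upper_gap in *; cbn [lnum lden unum uden] in *.
  set (P := Z.of_nat p) in *. set (Q := Z.of_nat q). set (Rr := Z.of_nat r).
  set (Uu := Z.of_nat u).
  assert (UZ : (Rr * Q = P * Uu + 1)%Z) by (unfold Rr, Q, P, Uu; lia).
  set (al := (Uu * x + Rr * y)%Z). set (be := (Q * x + P * y)%Z).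
  assert (Ex : x = (- al * P + be * Rr)%Z) by (unfold al, be; nia).
  assert (Ey : y = (al * Q - be * Uu)%Z) by (unfold al, be; nia).
  assert (Ev : IZR x + IZR y * th =
    IZR al * (INR q * th - INR p) + IZR be * (INR r - INR u * th)).
  { rewrite Ex at 1. rewrite Ey at 1. rewrite !INR_IZR_INZ. fold P Q Rr Uu.
    rewrite minus_IZR, !plus_IZR, !mult_IZR, opp_IZR. ring. }
  rewrite Ev in *. clearbody al be.
  destruct (Z_lt_le_dec 0 al) as [A1|A1]; destruct (Z_lt_le_dec 0 be) as [B1|B1].
  - left. assert (1 <= IZR al) by (apply IZR_le; lia).
    assert (1 <= IZR be) by (apply IZR_le; lia). split; nra.
  - destruct (Z.eq_dec be 0) as [->|].
    + right; left. assert (1 <= IZR al) by (apply IZR_le; lia). split; [simpl; nra|].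
      unfold P in Ex. nia.
    + exfalso. unfold P, Rr in Ex. nia.
  - destruct (Z.eq_dec al 0) as [->|].
    + right; right. assert (1 <= IZR be) by (apply IZR_le; lia). split; [simpl; nra|].
      unfold Uu in Ey. nia.
    + exfalso. unfold Q, Uu in Ey. nia.
  - exfalso. assert (IZR al <= 0) by (apply IZR_le; lia).
    assert (IZR be <= 0) by (apply IZR_le; lia). nra.
Qed.

(* At a governed lattice point with [lnum <= i], the next element of [S(theta)] is
   reached by the move [(-lnum, lden)], unless the upper move is available and shorter. *)
Lemma delta_lower_gap (X : bracket) (n i j : nat) : admissible X ->
  s n = INR i + INR j * th -> (lnum X <= i)%nat ->
  (i < lnum X + unum X)%nat -> (j < lden X + uden X)%nat ->
  ((j < uden X)%nat \/ lower_gap X <= upper_gap X) -> delta s n = lower_gap X.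
Proof.
  intros G Hn H1 H2 H3 H4.
  assert (Ev : IZR (- Z.of_nat (lnum X)) + IZR (Z.of_nat (lden X)) * th = lower_gap X).
  { unfold lower_gap. rewrite opp_IZR, <- !INR_IZR_INZ. ring. }
  rewrite <- Ev. pose proof G as (_ & Hl & Hu & _).
  apply (delta_least_move n i j); auto.
  - split; lia.
  - lra.
  - intros x' y' Hf Hv. rewrite Ev.
    destruct (move_ge_gap X i j x' y' G H2 H3 Hf Hv) as [[A B]|[[A B]|[A B]]]; try lra.
    destruct H4; [lia|lra].
Qed.

Lemma delta_upper_gap (X : bracket) (n i j : nat) : admissible X ->
  s n = INR i + INR j * th -> (uden X <= j)%nat ->
  (i < lnum X + unum X)%nat -> (j < lden X + uden X)%nat ->
  ((i < lnum X)%nat \/ upper_gap X <= lower_gap X) -> delta s n = upper_gap X.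
Proof.
  intros G Hn H1 H2 H3 H4.
  assert (Ev : IZR (Z.of_nat (unum X)) + IZR (- Z.of_nat (uden X)) * th = upper_gap X).
  { unfold upper_gap. rewrite opp_IZR, <- !INR_IZR_INZ. ring. }
  rewrite <- Ev. pose proof G as (_ & Hl & Hu & _).
  apply (delta_least_move n i j); auto.
  - split; lia.
  - lra.
  - intros x' y' Hf Hv. rewrite Ev.
    destruct (move_ge_gap X i j x' y' G H2 H3 Hf Hv) as [[A B]|[[A B]|[A B]]]; try lra.
    destruct H4; [lia|lra].
Qed.

Lemma delta_governed (X : bracket) (n i j : nat) : admissible X ->
  s n = INR i + INR j * th -> (i < lnum X + unum X)%nat -> (j < lden X + uden X)%nat ->
  ((lnum X <= i)%nat \/ (uden X <= j)%nat) ->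
  (delta s n = lower_gap X /\ (lnum X <= i)%nat) \/
  (delta s n = upper_gap X /\ (uden X <= j)%nat).
Proof.
  intros G Hn H2 H3 H4.
  destruct (le_lt_dec (lnum X) i) as [P|P].
  - destruct (lt_dec j (uden X)) as [J|J].
    + left. split; auto. apply (delta_lower_gap X n i j); auto.
    + destruct (Rle_lt_dec (lower_gap X) (upper_gap X)) as [C|C].
      * left. split; auto. apply (delta_lower_gap X n i j); auto.
      * right. split; [|lia]. apply (delta_upper_gap X n i j); auto; [lia | right; lra].
  - right. destruct H4 as [H4|H4]; [lia|]. split; auto.
    apply (delta_upper_gap X n i j); auto.
Qed.

(* The gap [|A - B theta|] of the mediant [A/B] of step [m], and the element of
   [S(theta)] ([A], or [B theta]) after which it first occurs. *)
Definition med_gap (m : nat) : R := Rabs (INR (med_num m) - INR (med_den m) * th).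
Definition med_point (m : nat) : R :=
  if Rlt_dec (INR (med_num m)) (INR (med_den m) * th)
  then INR (med_num m) else INR (med_den m) * th.

Lemma delta_values (k : nat) :
  delta s k = 1 \/ exists m, delta s k = med_gap m /\ med_point m <= s k.
Proof.
  destruct (s_in_S k) as [i [j Hk]].
  destruct (governs_all i j) as [n (C1 & C2 & C3)]. unfold med_num, med_den in C1, C2.
  assert (Hj : 0 <= INR j * th) by (pose proof (pos_INR j); nra).
  destruct (delta_governed (sb (S n)) k i j (sb_admissible (S n)) Hk C1 C2 C3)
    as [[D P]|[D P]];
  destruct (sb_ends_are_mediants n) as [[a (Ha1 & Ha2 & Ha3 & Ha4)] HU].
  - right. exists a. pose proof Ha2 as Hbelow. unfold med_below in Hbelow.
    rewrite Ha3, Ha4 in Hbelow. split.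
    + rewrite D. unfold med_gap, lower_gap. rewrite Ha3, Ha4, Rabs_left by lra. ring.
    + unfold med_point. destruct Rlt_dec; [|contradiction].
      rewrite Ha3, Hk. apply le_INR in P. lra.
  - destruct HU as [[E1 E2]|[b (Hb1 & Hb2 & Hb3 & Hb4)]].
    + left. rewrite D. unfold upper_gap. rewrite E1, E2. simpl. ring.
    + right. exists b. pose proof Hb2 as Habove. unfold med_below in Habove.
      rewrite Hb3, Hb4 in Habove. split.
      * rewrite D. unfold med_gap, upper_gap. rewrite Hb3, Hb4, Rabs_right by lra. ring.
      * unfold med_point. destruct Rlt_dec; [contradiction|].
        rewrite Hb4, Hk. apply le_INR in P. pose proof (pos_INR i). nra.
Qed.

Lemma med_point_in_S (m : nat) : inS th (med_point m).
Proof.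
  unfold med_point. destruct Rlt_dec.
  - exists (med_num m), 0%nat. simpl. ring.
  - exists 0%nat, (med_den m). simpl. ring.
Qed.

Lemma delta_at_med_point (m K : nat) : s K = med_point m -> delta s K = med_gap m.
Proof.
  intros HK. pose proof (sb_admissible (S m)) as G.
  pose proof G as (U & Hl & Hu & Hq & Hr). destruct (sb_gaps_le1 m) as [B1 B2].
  unfold med_point in HK.
  destruct (Rlt_dec (INR (med_num m)) (INR (med_den m) * th)) as [L|L].
  - rewrite (delta_lower_gap (sb (S m)) K (med_num m) 0 G).
    all: rewrite (sb_S_below m L) in *; cbn [lnum lden unum uden] in *; try lia.
    + unfold lower_gap, med_gap. cbn [lnum lden]. rewrite Rabs_left by lra. ring.
    + rewrite HK. simpl. ring.
    + (* if [uden = 0] then the upper end is [1/0] and the upper gap is [1] *)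
      destruct (uden (sb m)) eqn:Eu; [right | left; lia].
      unfold lower_gap, upper_gap in *. cbn [lnum lden unum uden] in *.
      assert (1 <= INR (unum (sb m))) by now apply (le_INR 1). simpl in *. lra.
  - rewrite (delta_upper_gap (sb (S m)) K 0 (med_den m) G).
    all: rewrite (sb_S_above m L) in *; cbn [lnum lden unum uden] in *; try lia.
    + unfold upper_gap, med_gap. cbn [unum uden].
      assert (INR (med_num m) <> INR (med_den m) * th).
      { intros E. apply irrational_relation_nat in E; auto.
        pose proof (med_den_pos m). lia. }
      rewrite Rabs_right by lra. ring.
    + rewrite HK. simpl. ring.
    + (* if [lnum = 0] then the lower end is [0/1] and the lower gap is [theta] *)
      destruct (lnum (sb m)) eqn:El; [right | left; lia].
      unfold lower_gap, upper_gap in *. cbn [lnum lden unum uden] in *.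
      assert (1 <= INR (lden (sb m))) by now apply (le_INR 1). simpl in *. nra.
Qed.

Lemma med_point_increasing (m : nat) : med_point m < med_point (S m).
Proof.
  pose proof (sb_admissible (S m)) as (U & Hl & Hu & Hq & Hr).
  unfold med_point, med_num, med_den. fold (med_num m) (med_den m).
  destruct (Rlt_dec (INR (med_num m)) (INR (med_den m) * th)) as [L|L].
  - rewrite (sb_S_below m L) in *. unfold lower_gap, upper_gap in *.
    cbn [lnum lden unum uden] in *. rewrite !plus_INR.
    assert (1 <= INR (unum (sb m))) by now apply (le_INR 1).
    pose proof (pos_INR (uden (sb m))).
    repeat destruct Rlt_dec; nra.
  - rewrite (sb_S_above m L) in *. unfold lower_gap, upper_gap in *.
    cbn [lnum lden unum uden] in *. rewrite !plus_INR.
    assert (1 <= INR (lden (sb m))) by now apply (le_INR 1).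
    pose proof (pos_INR (lnum (sb m))).
    repeat destruct Rlt_dec; nra.
Qed.

Lemma med_point_lt (a b : nat) : (a < b)%nat -> med_point a < med_point b.
Proof.
  induction 1 as [|b _ IH]; [apply med_point_increasing|].
  pose proof (med_point_increasing b). lra.
Qed.

Lemma med_point_lt_index (a b : nat) : med_point a < med_point b -> (a < b)%nat.
Proof.
  intros H. destruct (Nat.lt_ge_cases a b) as [|Hba]; auto.
  destruct (Nat.eq_dec a b) as [->|]; [lra|].
  pose proof (med_point_lt b a ltac:(lia)). lra.
Qed.

(* Distinct mediants have distinct gaps: equal signed gaps force equal mediants
   (irrationality), opposite ones an integer relation [A + A' = (B + B') theta]. *)
Lemma med_gap_inj (a b : nat) : med_gap a = med_gap b -> a = b.
Proof.
  intros E. pose proof (med_den_pos a). pose proof (med_den_pos b).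
  assert (Hcases :
    INR (med_num a) - INR (med_den a) * th = INR (med_num b) - INR (med_den b) * th \/
    INR (med_num a + med_num b) = INR (med_den a + med_den b) * th).
  { unfold med_gap, Rabs in E. rewrite !plus_INR.
    do 2 destruct Rcase_abs; [left | right | right | left]; lra. }
  destruct Hcases as [Same|Opposite].
  - destruct (S_repr_unique (med_num a) (med_den b) (med_num b) (med_den a))
      as [E1 E2]; [lra|].
    assert (Hpoint : med_point a = med_point b) by (unfold med_point; now rewrite E1, E2).
    destruct (Nat.lt_total a b) as [Hab|[Hab|Hab]]; auto; exfalso;
      [pose proof (med_point_lt a b Hab) | pose proof (med_point_lt b a Hab)]; lra.
  - apply irrational_relation_nat in Opposite; auto. lia.
Qed.

Lemma med_gap_ne1 (a : nat) : med_gap a <> 1.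
Proof.
  intros E. pose proof (med_den_pos a). unfold med_gap, Rabs in E. destruct Rcase_abs.
  - assert (Hrel : INR (med_num a + 1) = INR (med_den a) * th)
      by (rewrite plus_INR; simpl; lra).
    apply irrational_relation_nat in Hrel; auto. lia.
  - assert (Hrel : IZR (Z.of_nat (med_num a) - 1) = IZR (Z.of_nat (med_den a)) * th)
      by (rewrite minus_IZR, <- !INR_IZR_INZ; lra).
    apply irrational_relation in Hrel; auto. lia.
Qed.

Lemma s_0 : s 0%nat = 0.
Proof.
  pose proof Henum as [_ HS].
  destruct (HS 0) as [[n0 Hn0] _]; [exists 0%nat, 0%nat; simpl; ring|].
  destruct (s_in_S 0) as [i [j E]].
  assert (0 <= s 0%nat) by (rewrite E; pose proof (pos_INR i); pose proof (pos_INR j); nra).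
  destruct n0 as [|n0]; [lra|]. pose proof (s_increasing 0 (S n0) ltac:(lia)). lra.
Qed.

Lemma delta_0 : delta s 0 = 1.
Proof.
  replace 1 with (IZR 1 + IZR 0 * th) by (simpl; ring).
  apply (delta_least_move 0 0 0).
  - rewrite s_0. simpl. ring.
  - split; simpl; lia.
  - simpl. lra.
  - intros x y [Fx Fy] Hv. simpl in Fx, Fy.
    destruct (Z.eq_dec y 0) as [->|].
    + assert (x <> 0%Z) by (intros ->; simpl in Hv; lra).
      assert (1 <= IZR x) by (apply IZR_le; lia). lra.
    + assert (1 <= IZR y) by (apply IZR_le; lia).
      assert (0 <= IZR x) by (apply IZR_le; lia). nra.
Qed.

(** * Labels of the mediant gaps *)

Lemma med_point_0 : med_point 0 = 1.
Proof. unfold med_point, med_num, med_den. simpl. destruct Rlt_dec; lra. Qed.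

Lemma med_point_index (m : nat) : exists K, s K = med_point m.
Proof. destruct Henum as [_ HS]. apply HS, med_point_in_S. Qed.

Lemma first_occurrence_at_med_point (m K : nat) :
  s K = med_point m -> first_occb (delta s) K = true.
Proof.
  intros HK. rewrite first_occb_iff, (delta_at_med_point m K HK). intros k Hk E.
  destruct (delta_values k) as [E1|[m' [E1 E2]]].
  - apply (med_gap_ne1 m). congruence.
  - rewrite E in E1. apply med_gap_inj in E1 as ->.
    pose proof (s_increasing k K Hk). lra.
Qed.

Lemma first_occurrence_inv (k : nat) :
  first_occb (delta s) k = true -> k = 0%nat \/ exists m, s k = med_point m.
Proof.
  intros Hfirst. destruct k as [|k]; [now left|right].
  rewrite first_occb_iff in Hfirst.
  destruct (delta_values (S k)) as [E1|[m [E1 E2]]].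
  - exfalso. apply (Hfirst 0%nat); [lia|]. now rewrite delta_0, E1.
  - exists m. destruct (med_point_index m) as [K HK].
    rewrite <- HK in E2 |- *. apply s_le_index in E2.
    destruct (Nat.eq_dec K (S k)) as [->|]; auto.
    exfalso. apply (Hfirst K); [lia|]. now rewrite (delta_at_med_point m K HK).
Qed.

Lemma no_first_occurrence_before (m i : nat) : (0 < i)%nat -> s i < med_point m ->
  (forall m', (m' < m)%nat -> med_point m' < s i) -> first_occb (delta s) i = false.
Proof.
  intros Hi Hlt Hgt. destruct (first_occb (delta s) i) eqn:Hfirst; auto.
  destruct (first_occurrence_inv i Hfirst) as [->|[m' Hm']]; [lia|].
  rewrite Hm' in Hlt, Hgt. apply med_point_lt_index in Hlt.
  specialize (Hgt m' Hlt). lra.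
Qed.

Lemma n_distinct_at_med_point (m K : nat) :
  s K = med_point m -> n_distinct_before (delta s) K = S m.
Proof.
  revert K. induction m as [|m IH]; intros K HK.
  - assert (HK0 : (0 < K)%nat) by (apply s_lt_index; rewrite HK, s_0, med_point_0; lra).
    rewrite (n_distinct_before_next _ 0 K HK0); [reflexivity|reflexivity|].
    intros i Hi. apply (no_first_occurrence_before 0); [lia| |lia].
    rewrite <- HK. apply s_increasing. lia.
  - destruct (med_point_index m) as [K' HK'].
    assert (HK'K : (K' < K)%nat)
      by (apply s_lt_index; rewrite HK, HK'; apply med_point_increasing).
    rewrite (n_distinct_before_next _ K' K HK'K), (IH K' HK'); auto.
    + now apply (first_occurrence_at_med_point m).
    + intros i Hi. apply (no_first_occurrence_before (S m)); [lia| |].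
      * rewrite <- HK. apply s_increasing. lia.
      * intros m' Hm'. apply Rle_lt_trans with (med_point m).
        -- destruct (Nat.eq_dec m' m) as [->|]; [lra|]. left. apply med_point_lt. lia.
        -- rewrite <- HK'. apply s_increasing. lia.
Qed.

Lemma label_med_gap (m : nat) : lam (delta s) (med_gap m) (S m).
Proof.
  destruct (med_point_index m) as [K HK]. exists K. split; [|split].
  - now apply delta_at_med_point.
  - rewrite <- (delta_at_med_point m K HK). apply first_occb_iff.
    now apply (first_occurrence_at_med_point m).
  - symmetry. now apply n_distinct_at_med_point.
Qed.

(** * Convergents are mediants of the walk *)

Definition level_bracket (a1 b1 a0 b0 : nat) : bracket :=
  if Rlt_dec 0 (INR a1 - INR b1 * th) then Bracket a0 b0 a1 b1 else Bracket a1 b1 a0 b0.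

Lemma level_bracket_mediant (a1 b1 a0 b0 : nat) :
  (lnum (level_bracket a1 b1 a0 b0) + unum (level_bracket a1 b1 a0 b0) = a1 + a0)%nat /\
  (lden (level_bracket a1 b1 a0 b0) + uden (level_bracket a1 b1 a0 b0) = b1 + b0)%nat.
Proof. unfold level_bracket. destruct Rlt_dec; simpl; lia. Qed.

Lemma level_bracket_swap (a1 b1 a0 b0 : nat) :
  (INR a1 - INR b1 * th) * (INR a0 - INR b0 * th) < 0 ->
  level_bracket a1 b1 a0 b0 = level_bracket a0 b0 a1 b1.
Proof. intros H. unfold level_bracket. do 2 destruct Rlt_dec; auto; nra. Qed.

Lemma level_walk (a1 b1 a0 b0 N tj : nat) (x : R) :
  sb N = level_bracket a1 b1 a0 b0 -> INR a1 - INR b1 * th <> 0 ->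
  x * (INR a1 - INR b1 * th) + (INR a0 - INR b0 * th) = 0 -> INR tj < x ->
  forall t, (t <= tj)%nat -> sb (N + t) = level_bracket a1 b1 (t * a1 + a0) (t * b1 + b0).
Proof.
  intros HN Hnz Hx Htj t. induction t as [|t IH]; intros Ht.
  - now rewrite Nat.add_0_r.
  - assert (Ht' : INR t + 1 < x) by (apply le_INR in Ht; rewrite S_INR in Ht; lra).
    (* the next mediant lies on the other side of [theta] than [a1/b1] *)
    assert (Key : (INR t * INR a1 + INR a0 + INR a1) - (INR t * INR b1 + INR b0 + INR b1) * th
      = (INR a1 - INR b1 * th) * (INR t + 1 - x)) by nra.
    rewrite Nat.add_succ_r. simpl. rewrite IH by lia.
    unfold sb_step, level_bracket in *.
    destruct (Rlt_dec 0 (INR a1 - INR b1 * th)) as [Hpos|Hneg]; cbn [lnum lden unum uden];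
      destruct Rlt_dec as [L|L]; try (f_equal; lia); exfalso;
      rewrite !plus_INR, !mult_INR in L; nra.
Qed.

Lemma pab_SS (n : nat) :
  pa th (S (S n)) = (cf_t th n * pa th (S n) + pa th n)%nat /\
  pb th (S (S n)) = (cf_t th n * pb th (S n) + pb th n)%nat.
Proof.
  unfold pa, pb. change (pab th (S (S n))) with
    (let (a1, b1) := pab th (S n) in let (a0, b0) := pab th n in
      (cf_t th n * a1 + a0, cf_t th n * b1 + b0)%nat).
  destruct (pab th (S n)), (pab th n). simpl. auto.
Qed.

(* [t_0 + ... + t_(j-1)]: the step at which the bracket consists of the convergents
   [a_(j-1)/b_(j-1)] and [a_(j-2)/b_(j-2)] (see [convergent_level]). *)
Fixpoint quot_sum (j : nat) : nat :=
  match j with O => O | S j' => (quot_sum j' + cf_t th j')%nat end.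

Definition pgap (j : nat) : R := INR (pa th j) - INR (pb th j) * th.

Lemma convergent_level (j : nat) :
  pgap (S j) <> 0 /\ cf_rem th j * pgap (S j) + pgap j = 0 /\
  sb (quot_sum j) = level_bracket (pa th (S j)) (pb th (S j)) (pa th j) (pb th j).
Proof.
  induction j as [|j (Hnz & Hrel & Hsb)].
  - unfold pgap, pa, pb, level_bracket. simpl. destruct Rlt_dec; repeat split; lra.
  - destruct (cf_t_spec th Hirr ltac:(lra) j) as [Ht Hrem].
    destruct (pab_SS j) as [Ea Eb].
    assert (Hnext : pgap (S (S j)) = pgap (S j) * (INR (cf_t th j) - cf_rem th j)).
    { unfold pgap in *. rewrite Ea, Eb, !plus_INR, !mult_INR. nra. }
    assert (Hsign : pgap (S j) * pgap (S (S j)) < 0).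
    { rewrite Hnext. assert (0 < pgap (S j) * pgap (S j)) by (apply Rsqr_pos_lt; auto). nra. }
    repeat split.
    + intros E. rewrite E in Hsign. lra.
    + rewrite Hnext. nra.
    + simpl. rewrite (level_walk _ _ _ _ _ (cf_t th j) (cf_rem th j) Hsb Hnz Hrel Ht) by lia.
      rewrite <- Ea, <- Eb. apply level_bracket_swap. exact Hsign.
Qed.

Lemma convergent_is_mediant (j t : nat) : (1 <= t <= cf_t th j)%nat ->
  med_num (quot_sum j + (t - 1)) = (t * pa th (S j) + pa th j)%nat /\
  med_den (quot_sum j + (t - 1)) = (t * pb th (S j) + pb th j)%nat.
Proof.
  intros Ht. destruct (convergent_level j) as (Hnz & Hrel & Hsb).
  destruct (cf_t_spec th Hirr ltac:(lra) j) as [Htj _].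
  unfold med_num, med_den.
  rewrite (level_walk _ _ _ _ _ (cf_t th j) (cf_rem th j) Hsb Hnz Hrel Htj (t - 1)) by lia.
  destruct (level_bracket_mediant (pa th (S j)) (pb th (S j))
    ((t - 1) * pa th (S j) + pa th j) ((t - 1) * pb th (S j) + pb th j)) as [E1 E2].
  rewrite E1, E2. split; nia.
Qed.

(** * Depth of the mediants *)

(* The bracket after [n] steps is a product of [n] Stern-Brocot moves, each adding
   one subtraction step to the Euclidean algorithm. *)
Lemma euclid_depth_sb (n a b : nat) : (1 <= a)%nat -> (1 <= b)%nat ->
  euclid_depth (a * lnum (sb n) + b * unum (sb n)) (a * lden (sb n) + b * uden (sb n)) =
  (euclid_depth a b + n)%nat.
Proof.
  revert a b. induction n as [|n IH]; intros a b Ha Hb.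
  - cbn [sb lnum lden unum uden].
    replace (a * 0 + b * 1)%nat with b by lia. replace (a * 1 + b * 0)%nat with a by lia.
    rewrite euclid_depth_sym. lia.
  - simpl. unfold sb_step. destruct Rlt_dec; cbn [lnum lden unum uden].
    + replace (a * (lnum (sb n) + unum (sb n)) + b * unum (sb n))%nat
        with (a * lnum (sb n) + (a + b) * unum (sb n))%nat by ring.
      replace (a * (lden (sb n) + uden (sb n)) + b * uden (sb n))%nat
        with (a * lden (sb n) + (a + b) * uden (sb n))%nat by ring.
      rewrite IH, euclid_depth_add_l by lia. lia.
    + replace (a * lnum (sb n) + b * (lnum (sb n) + unum (sb n)))%nat
        with ((a + b) * lnum (sb n) + b * unum (sb n))%nat by ring.
      replace (a * lden (sb n) + b * (lden (sb n) + uden (sb n)))%nat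
        with ((a + b) * lden (sb n) + b * uden (sb n))%nat by ring.
      rewrite IH, euclid_depth_add by lia. lia.
Qed.

Lemma euclid_depth_mediant (n : nat) : euclid_depth (med_num n) (med_den n) = S n.
Proof.
  pose proof (euclid_depth_sb n 1 1 (le_n 1) (le_n 1)) as H.
  rewrite !Nat.mul_1_l, euclid_depth_diag in H by lia. exact H.
Qed.

End FixedTheta.

Theorem mainTheorem13 (theta : R) (s : nat -> R) :
  1 < theta < 2 -> irrational theta -> is_increasing_enum theta s ->
  lam (delta s) (Rabs (INR 1 - INR 0 * theta)) 0%nat /\
  (forall (j t A B c0 : nat) (cs : list nat),
     (1 <= t <= cf_t theta j)%nat ->
     A = (t * pa theta (S j) + pa theta j)%nat ->
     B = (t * pb theta (S j) + pb theta j)%nat ->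
     (1 <= c0)%nat -> Forall (fun c => (1 <= c)%nat) cs ->
     cf_val c0 cs = INR A / INR B ->
     lam (delta s) (Rabs (INR A - INR B * theta)) (c0 + list_sum cs)%nat).
Proof.
  intros Hth Hirr Henum. split.
  -
    exists 0%nat. split; [|split; [intros; lia | reflexivity]].
    rewrite (delta_0 theta Hth s Henum). simpl. rewrite Rmult_0_l, Rminus_0_r, Rabs_R1. auto.
  - intros j t A B c0 cs Ht HA HB Hc0 Hcs Hval.
    (* [A/B] is the mediant examined at step [n], whose gap has label [n + 1] *)
    set (n := (quot_sum theta j + (t - 1))%nat).
    destruct (convergent_is_mediant theta Hirr Hth j t Ht) as [EA EB].
    fold n in EA, EB. rewrite <- HA in EA. rewrite <- HB in EB.
    (* and [n + 1] is the Euclidean depth of [A/B], i.e. the sum of its partial quotients *)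
    assert (HA1 : (1 <= A)%nat) by (rewrite <- EA; now apply med_num_pos).
    assert (HB1 : (1 <= B)%nat) by (rewrite <- EB; now apply med_den_pos).
    rewrite <- (euclid_depth_cf_val cs c0 A B Hc0 Hcs HA1 HB1 Hval).
    rewrite <- EA, <- EB, euclid_depth_mediant. now apply label_med_gap.
Qed.
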